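(* Let $\mathcal{A}=\{1,\dots,n\}$ be a set of agents connected by a directed chain $1\to 2\to\cdots\to n$. Each agent $i$ has a finite local strategy set $\mathcal{P}_i$, the sets $\mathcal{P}_1,\dots,\mathcal{P}_n$ pairwise disjoint, and an integer budget $\kappa_i\ge 1$. Let $\mathcal{P}=\bigcup_{i\in\mathcal{A}}\mathcal{P}_i$. Let $f:2^{\mathcal{P}}\to\mathbb{R}_{\ge 0}$ be normal ($f(\emptyset)=0$), monotone nondecreasing and submodular. Let $\mathcal{S}^\star$ be a maximizer of $f(\mathcal{S})$ over $\mathcal{I}=\{\mathcal{S}\subset\mathcal{P} : |\mathcal{S}\cap\mathcal{P}_i|\le\kappa_i \ \forall i\in\mathcal{A}\}$. The agents run the decentralized sequential greedy algorithm, in which each message transmission may fail. Agent $1$ starts from $\bar{\mathcal{S}}_0=\emptyset$. For $i\ge 2$, agent $i$ starts from the set $\bar{\mathcal{S}}_{i-1}$ if the message from agent $i-1$ was delivered, and from $\emptyset$ otherwise. Starting from this set, agent $i$ performs $\kappa_i$ greedy steps; in each step it adds to its current set an element $s\in\mathcal{P}_i$ not yet selected that maximizes the marginal gain $f(\text{current}\cup\{s\})-f(\text{current})$. Call the result $\bar{\mathcal{S}}_i$; agent $i$ then sends $\bar{\mathcal{S}}_i$ to agent $i+1$. The message from agent $i$ to agent $i+1$ is successfully delivered with probability $p_i$, for $i=1,\dots,n-1$. The output of the algorithm is $\bar{\mathcal{S}}=\bigcup_{i\in\mathcal{A}}\bar{\mathcal{S}}_i$. Let $\mathcal{W}(\mathcal{G}_I)$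 denote the (random) clique number of the information graph $\mathcal{G}_I$ of the run. Then $$\mathbb{E}[f(\bar{\mathcal{S}})]\ \ge\ \alpha_p\, f(\mathcal{S}^\star),\qquad\text{where } \alpha_p=\sum_{l=1}^{n}\frac{1}{2+n-l}\,P\big(\mathcal{W}(\mathcal{G}_I)=l\big).$$
   Context: The information graph $\mathcal{G}_I$ of a run is the directed graph on $\mathcal{A}$ with an arc from agent $i$ to agent $j$ whenever agent $j$ has received agent $i$'s information, either directly or relayed through intermediate agents along the chain. Equivalently, there is an arc $i\to j$ for $i<j$ exactly when all messages $i\to i+1,\dots,j-1\to j$ were delivered. The clique number $\mathcal{W}(\mathcal{G}_I)$ is the size of the largest complete subgraph of the undirected version of $\mathcal{G}_I$. It equals one plus the length of the longest run of consecutive successfully delivered chain edges, and it equals $n$ when all messages are delivered. *)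

From mathcomp Require Import all_boot all_order all_algebra.
Set Implicit Arguments. Unset Strict Implicit. Unset Printing Implicit Defensive.
Import Order.TTheory GRing.Theory Num.Theory.
Local Open Scope ring_scope.

(* Agents are 0,...,n-1 (agent i of the paper is i-1 here).
   The ground set P is a finite type T; [owner x] is the agent whose local
   strategy set contains x, so P_i = [set x | owner x == i]; the P_i are
   pairwise disjoint and cover P. *)
Section Defs.
Variables (T : finType) (R : realFieldType).

Definition Pset (owner : T -> nat) (i : nat) : {set T} := [set x | owner x == i].

Definition normal_fun (f : {set T} -> R) := f set0 = 0.
Definition monotone_fun (f : {set T} -> R) :=
  forall A B : {set T}, A \subset B -> f A <= f B.
Definition submodular_fun (f : {set T} -> R) :=
  forall A B : {set T}, f (A :|: B) + f (A :&: B) <= f A + f B.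

Definition feasible (n : nat) (owner : T -> nat) (kappa : nat -> nat) (S : {set T}) :=
  forall i, (i < n)%N -> (#|S :&: Pset owner i| <= kappa i)%N.

Definition greedy_choice (f : {set T} -> R) (owner : T -> nat)
  (choose : nat -> {set T} -> option T) :=
  forall i (X : {set T}),
    (choose i X = None <-> (forall s, s \in Pset owner i -> s \in X)) /\
    (forall s, choose i X = Some s ->
       [/\ s \in Pset owner i, s \notin X &
         forall t, t \in Pset owner i -> t \notin X ->
           f (t |: X) - f X <= f (s |: X) - f X]).

Definition greedy_step (choose : nat -> {set T} -> option T) (i : nat) (X : {set T}) :=
  match choose i X with Some s => s |: X | None => X end.

Definition agent_run (choose : nat -> {set T} -> option T) (kappa : nat -> nat)
  (i : nat) (X : {set T}) : {set T} := iter (kappa i) (greedy_step choose i) X.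

(* delivery outcome: [tnth w k] = message from agent k to agent k+1 delivered *)
Definition delivered (n : nat) (w : n.-1.-tuple bool) (k : nat) : bool :=
  nth false w k.

Fixpoint Sbar (n : nat) (w : n.-1.-tuple bool) (choose : nat -> {set T} -> option T)
  (kappa : nat -> nat) (i : nat) : {set T} :=
  match i with
  | 0 => agent_run choose kappa 0 set0
  | m.+1 => agent_run choose kappa m.+1
              (if delivered w m then Sbar w choose kappa m else set0)
  end.

Definition output (n : nat) (w : n.-1.-tuple bool) choose kappa : {set T} :=
  \bigcup_(i < n) Sbar w choose kappa i.

End Defs.

Section Prob.
Variable (R : realFieldType).

Definition prob_outcome (n : nat) (p : nat -> R) (w : n.-1.-tuple bool) : R :=
  \prod_(k < n.-1) (if tnth w k then p k else 1 - p k).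

Definition info_arc (n : nat) (w : n.-1.-tuple bool) (i j : 'I_n) : bool :=
  (i < j)%N && [forall k : 'I_n.-1, ((i <= k) && (k < j))%N ==> tnth w k].

Definition info_adj (n : nat) (w : n.-1.-tuple bool) (i j : 'I_n) : bool :=
  (i != j) && (info_arc w i j || info_arc w j i).

Definition is_clique (n : nat) (w : n.-1.-tuple bool) (A : {set 'I_n}) : bool :=
  [forall i in A, forall j in A, (i != j) ==> info_adj w i j].

Definition clique_number (n : nat) (w : n.-1.-tuple bool) : nat :=
  \max_(A : {set 'I_n} | is_clique w A) #|A|.

Definition prob_clique (n : nat) (p : nat -> R) (l : nat) : R :=
  \sum_(w : n.-1.-tuple bool | clique_number w == l) prob_outcome p w.

Definition alpha_p (n : nat) (p : nat -> R) : R :=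
  \sum_(1 <= l < n.+1) ((2 + n - l)%N%:R)^-1 * prob_clique n p l.

End Prob.

From mathcomp Require Import all_boot all_order all_algebra.
From mathcomp Require Import lra zify.

Set Implicit Arguments.
Unset Strict Implicit.
Unset Printing Implicit Defensive.
Import Order.TTheory GRing.Theory Num.Theory.
Local Open Scope ring_scope.

(* Fix a delivery pattern and let U be the output. By submodularity f(Sstar)
   is at most f(U) plus the marginal gains w.r.t. U of the elements of Sstar.
   Agent i owns at most kappa_i of them, and each one's gain is dominated by
   one of its greedy steps, so they contribute at most f(Sbar_i) - f(X_i),
   X_i being the set agent i started from. These differences telescope along
   delivered messages, leaving f(Sbar_(n-1)) and one f(Sbar_m) per failed
   message m: f(Sstar) <= (2 + #failures) f(U). Finally a clique of the
   information graph contains no failed message between its agents, whence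
   clique number + #failures <= n, and averaging over delivery patterns
   yields alpha_p. *)

Section Greedy.
Variables (R : realFieldType) (T : finType) (f : {set T} -> R).
Hypotheses (f_mono : monotone_fun f) (f_submod : submodular_fun f).

Definition gain (o : T) (X : {set T}) : R := f (o |: X) - f X.

Lemma gain_ge0 o (X : {set T}) : 0 <= gain o X.
Proof. by rewrite subr_ge0; apply/f_mono/subsetUr. Qed.

Lemma gain_mem o (X : {set T}) : o \in X -> gain o X = 0.
Proof. by move=> oX; rewrite /gain (setUidPr _) ?subrr // sub1set. Qed.

Lemma gain_antimono o (Z U : {set T}) : Z \subset U -> gain o U <= gain o Z.
Proof.
move=> ZU; have [oU|oU] := boolP (o \in U); first by rewrite gain_mem ?gain_ge0.
have := f_submod (o |: Z) U.
have -> : (o |: Z) :|: U = o |: U by rewrite -setUA (setUidPr ZU).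
have -> : (o |: Z) :&: U = Z.
  by rewrite setIUl (setIidPl ZU) (disjoint_setI0 _) ?set0U // disjoints1.
rewrite /gain; lra.
Qed.

Lemma gain_union_le (A U : {set T}) : f (A :|: U) - f U <= \sum_(o in A) gain o U.
Proof.
rewrite -big_enum -[in A :|: U](set_enum A); elim: (enum A) => [|o s IHs].
  by rewrite big_nil set0U subrr.
have -> : [set x in o :: s] = o |: [set x in s] := set_cons o s.
rewrite big_cons /= -setUA.
have := gain_antimono o (subsetUr [set x in s] U); rewrite /gain in IHs *; lra.
Qed.

Variables (owner : T -> nat) (choose : nat -> {set T} -> option T).
Hypothesis f_greedy : greedy_choice f owner choose.

Lemma greedy_step_sub i (X : {set T}) : X \subset greedy_step choose i X.
Proof. by rewrite /greedy_step; case: (choose i X) => // s; apply: subsetUr. Qed.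

Lemma iter_greedy_step_sub i k (X : {set T}) : X \subset iter k (greedy_step choose i) X.
Proof.
elim: k => [|k IHk] /=; first exact: subxx.
exact: subset_trans IHk (greedy_step_sub _ _).
Qed.

Lemma greedy_step_gain i o (Z U : {set T}) : o \in Pset owner i -> Z \subset U ->
  gain o U <= f (greedy_step choose i Z) - f Z.
Proof.
move=> oPi ZU; have [choose_none choose_some] := f_greedy i Z.
have step_ge0 : 0 <= f (greedy_step choose i Z) - f Z.
  by rewrite subr_ge0; apply/f_mono/greedy_step_sub.
have [oZ|oZ] := boolP (o \in Z); first by rewrite gain_mem ?(subsetP ZU).
rewrite /greedy_step; case Es: (choose i Z) => [s|]; last first.
  by move/choose_none: Es => /(_ o oPi); rewrite (negbTE oZ).
have [_ _ s_max] := choose_some s Es.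
exact: le_trans (gain_antimono o ZU) (s_max o oPi oZ).
Qed.

Lemma greedy_iter_gain i k (X U O : {set T}) :
  iter k (greedy_step choose i) X \subset U -> O \subset Pset owner i ->
  (#|O| <= k)%N ->
  \sum_(o in O) gain o U <= f (iter k (greedy_step choose i) X) - f X.
Proof.
elim: k O => [|k IHk] O /= runU OPi.
  by rewrite leqn0 => /eqP/cards0_eq ->; rewrite big_set0 subrr.
set Z := iter k _ X in IHk runU *; move=> cardO.
have ZU : Z \subset U := subset_trans (greedy_step_sub i Z) runU.
have [->|[o oO]] := set_0Vmem O.
  rewrite big_set0 subr_ge0; apply: f_mono.
  exact: subset_trans (iter_greedy_step_sub i k X) (greedy_step_sub i Z).
rewrite (big_setD1 o oO) /=.
have := greedy_step_gain (subsetP OPi o oO) ZU.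
have := IHk (O :\ o) ZU (subset_trans (subsetDl _ _) OPi).
rewrite (cardsD1 o O) oO in cardO; move/(_ cardO); lra.
Qed.

End Greedy.

Lemma sum_sub_sum_cond_le (R : realFieldType) N (F : nat -> R) (b : 'I_N -> bool) c :
  (forall i, (i <= N)%N -> F i <= c) ->
  \sum_(i < N.+1) F i - \sum_(m < N | b m) F m <= c *+ #|[pred m | ~~ b m]|.+1.
Proof.
move=> Fc; have FN := Fc N (leqnn N).
have sum_notb_le : \sum_(m < N | ~~ b m) F m <= c *+ #|[pred m | ~~ b m]|.
  by rewrite -sumr_const; apply: ler_sum => m _; apply/Fc/ltnW.
rewrite big_ord_recr (bigID b) /= mulrS; lra.
Qed.

Definition failures n (w : n.-1.-tuple bool) : {set 'I_n.-1} := [set k | ~~ tnth w k].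

Definition start_set (T : finType) n (w : n.-1.-tuple bool)
    (choose : nat -> {set T} -> option T) (kappa : nat -> nat) (i : nat) : {set T} :=
  if i is m.+1 then (if delivered w m then Sbar w choose kappa m else set0) else set0.

Lemma Sbar_start (T : finType) n (w : n.-1.-tuple bool)
    (choose : nat -> {set T} -> option T) (kappa : nat -> nat) (i : nat) :
  Sbar w choose kappa i = agent_run choose kappa i (start_set w choose kappa i).
Proof. by case: i. Qed.

Lemma sum_agent_gain_le (R : realFieldType) (T : finType) (f : {set T} -> R) n
    (w : n.-1.-tuple bool) (choose : nat -> {set T} -> option T) (kappa : nat -> nat) c :
  normal_fun f -> 0 <= c -> (forall i, (i < n)%N -> f (Sbar w choose kappa i) <= c) ->
  \sum_(i < n) (f (Sbar w choose kappa i) - f (start_set w choose kappa i))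
    <= c *+ #|failures w|.+1.
Proof.
case: n w => [|N] w f0 c_ge0 Fc; first by rewrite big_ord0 mulrn_wge0.
have start_sum : \sum_(i < N.+1) f (start_set w choose kappa i)
    = \sum_(m < N | tnth w m) f (Sbar w choose kappa m).
  rewrite big_ord_recl f0 add0r [RHS]big_mkcond; apply: eq_bigr => m _ /=.
  by rewrite /delivered add0n -tnth_nth (fun_if f) f0.
rewrite sumrB start_sum cardsE; exact: (sum_sub_sum_cond_le (tnth w) Fc).
Qed.

Lemma greedy_output_approx (R : realFieldType) (T : finType) (f : {set T} -> R) n
    (owner : T -> nat) (kappa : nat -> nat) (choose : nat -> {set T} -> option T)
    (Sstar : {set T}) (w : n.-1.-tuple bool) :
  (forall x, (owner x < n)%N) ->
  normal_fun f -> monotone_fun f -> submodular_fun f ->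
  greedy_choice f owner choose -> feasible n owner kappa Sstar ->
  f Sstar <= f (output w choose kappa) *+ #|failures w|.+2.
Proof.
move=> owner_lt f0 f_mono f_submod f_greedy Sstar_feas.
set U := output w choose kappa.
have SbarU i : (i < n)%N -> Sbar w choose kappa i \subset U.
  by move=> lt_in; apply: (bigcup_sup (Ordinal lt_in)).
have U_ge0 : 0 <= f U by rewrite -f0; apply/f_mono/sub0set.
have gain_by_owner : \sum_(o in Sstar) gain f o U
    = \sum_(i < n) \sum_(o in Sstar :&: Pset owner i) gain f o U.
  rewrite (partition_big (fun o => Ordinal (owner_lt o)) xpredT) //=.
  apply: eq_bigr => i _; apply: eq_bigl => o.
  by rewrite !inE -val_eqE.
have gains_le : \sum_(o in Sstar) gain f o U
    <= \sum_(i < n) (f (Sbar w choose kappa i) - f (start_set w choose kappa i)).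
  rewrite gain_by_owner; apply: ler_sum => i _.
  have := SbarU i (ltn_ord i); rewrite Sbar_start => run_U.
  by apply: greedy_iter_gain run_U (subsetIr _ _) (Sstar_feas i (ltn_ord i)).
have := sum_agent_gain_le f0 U_ge0 (fun i lt_in => f_mono _ _ (SbarU i lt_in)).
have := gain_union_le f_mono f_submod Sstar U.
have := f_mono _ _ (subsetUl Sstar U).
rewrite mulrS; lra.
Qed.

Lemma clique_delivered n (w : n.-1.-tuple bool) (A : {set 'I_n}) i j (k : 'I_n.-1) :
  is_clique w A -> i \in A -> j \in A -> (i <= k < j)%N -> tnth w k.
Proof.
move=> clA iA jA /andP[le_ik lt_kj].
have lt_ij : (i < j)%N := leq_ltn_trans le_ik lt_kj.
have /andP[_ /orP[/andP[_ /forallP/(_ k)] | /andP[lt_ji _]]] : info_adj w i j.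
  move: clA => /forall_inP/(_ i iA)/forall_inP/(_ j jA)/implyP; apply.
  by apply/eqP => eq_ij; rewrite eq_ij ltnn in lt_ij.
  by rewrite le_ik lt_kj.
by rewrite ltnNge (ltnW lt_ij) in lt_ji.
Qed.

Lemma clique_failures_card n (w : n.-1.-tuple bool) (A : {set 'I_n}) :
  is_clique w A -> (#|A| + #|failures w| <= n)%N.
Proof.
move=> clA; have [->|[a aA]] := set_0Vmem A.
  by rewrite cards0 add0n (leq_trans (max_card _)) // card_ord leq_pred.
have [m mA m_min] := arg_minnP val aA.
(* [lift m k] is k when k < m, below every agent of A, and k+1 otherwise, which
   is not in A either: the arc from m to k+1 would cross the failed message k. *)
have disj : A :&: lift m @: failures w = set0.
  apply/setP => x; rewrite !inE; apply/andP => -[xA /imsetP[k]].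
  rewrite inE => k_fail x_def; rewrite x_def in xA.
  case: (leqP m k) => [le_mk | lt_km].
    have := clique_delivered (k := k) clA mA xA; rewrite /= /bump le_mk /= ltnSn.
    by move=> /(_ isT) k_delivered; rewrite k_delivered in k_fail.
  by have := m_min _ xA; rewrite /= /bump (leqNgt m k) lt_km add0n leqNgt lt_km.
rewrite -(card_imset (failures w) (@lift_inj _ m)) -cardsUI disj cards0 addn0.
by apply: leq_trans (max_card _) _; rewrite card_ord.
Qed.

Lemma clique_number_failures n (w : n.-1.-tuple bool) :
  (clique_number w + #|failures w| <= n)%N.
Proof.
have fail_le : (#|failures w| <= n)%N.
  by rewrite (leq_trans (max_card _)) // card_ord leq_pred.
suff : (clique_number w <= n - #|failures w|)%N by lia.
apply/bigmax_leqP => A /clique_failures_card; lia.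
Qed.

Lemma prob_outcome_ge0 (R : realFieldType) n (p : nat -> R) (w : n.-1.-tuple bool) :
  (forall k, (k < n.-1)%N -> 0 <= p k <= 1) -> 0 <= prob_outcome p w.
Proof.
move=> p01; apply: prodr_ge0 => k _; have /andP[p_ge0 p_le1] := p01 k (ltn_ord k).
by case: (tnth w k); rewrite ?subr_ge0.
Qed.

Lemma sum_prob_clique (R : realFieldType) n (p : nat -> R) (g : nat -> R) a b :
  \sum_(a <= l < b) g l * prob_clique n p l
  = \sum_(w : n.-1.-tuple bool)
      prob_outcome p w * (if (a <= clique_number w < b)%N then g (clique_number w) else 0).
Proof.
under eq_bigr do rewrite mulr_sumr big_mkcond.
rewrite exchange_big /=; apply: eq_bigr => w _.
rewrite -big_mkcond (eq_bigl (pred1 (clique_number w))) => [|l]; last exact: eq_sym.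
case: ifP => c_in; last first.
  by rewrite big1_seq ?mulr0 // => l /andP[/eqP -> l_in]; rewrite mem_index_iota c_in in l_in.
rewrite -big_filter filter_pred1_uniq ?mem_index_iota //; last exact: iota_uniq.
by rewrite big_seq1 mulrC.
Qed.

Theorem theorem1 (R : realFieldType) (T : finType) (n : nat)
  (owner : T -> nat) (kappa : nat -> nat) (p : nat -> R)
  (f : {set T} -> R) (choose : nat -> {set T} -> option T) (Sstar : {set T}) :
  (forall x, (owner x < n)%N) ->
  (forall i, (i < n)%N -> (0 < kappa i)%N) ->
  (forall k, (k < n.-1)%N -> 0 <= p k <= 1) ->
  (forall A, 0 <= f A) ->
  normal_fun f -> monotone_fun f -> submodular_fun f ->
  feasible n owner kappa Sstar ->
  (forall S, feasible n owner kappa S -> f S <= f Sstar) ->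
  greedy_choice f owner choose ->
  \sum_(w : n.-1.-tuple bool) prob_outcome p w * f (output w choose kappa)
    >= alpha_p n p * f Sstar.
Proof.
move=> owner_lt _ p01 f_ge0 f0 f_mono f_submod Sstar_feas _ f_greedy.
rewrite /alpha_p sum_prob_clique mulr_suml; apply: ler_sum => w _.
rewrite -mulrA; apply: ler_wpM2l; first exact: prob_outcome_ge0.
case: ifP => [/andP[_ c_le] | _]; last by rewrite mul0r f_ge0.
have := clique_number_failures w; set c := clique_number w => c_fail.
rewrite ler_pdivrMl ?ltr0n; last lia.
apply: le_trans (greedy_output_approx w owner_lt f0 f_mono f_submod f_greedy Sstar_feas) _.
by rewrite mulr_natl; apply: ler_wpMn2l => //; lia.
Qed.
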